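(* Let $\mathcal X$ be the ternary coalescent started from a finite configuration $\mathbf r=(r_1,\dots,r_N)\in\mathcal S^\downarrow$ with $N=2n+1$, $n\in\mathbb Z_+$, and total mass $M=r_1+\dots+r_N$. Let $T_0=0$, $T_k$ the time of the $k$-th coagulation ($1\le k\le n$), and $\mathcal X'_k=\mathcal X(T_k)$, $0\le k\le n$. Then: (i) The waiting times $\Delta_k=T_k-T_{k-1}$, $k=1,\dots,n$, are independent exponential random variables with respective parameters $\alpha(k)=\frac12(M+N+2-2k)(N+1-2k)(N-2k)$. In particular, the sequences $(T_k)_{0\le k\le n}$ and $(\mathcal X'_k)_{0\le k\le n}$ are independent. (ii) $(\mathcal X'_k)_{0\le k\le n}$ is a Markov chain with transition probabilities $$\mathbb P\big(\mathcal X'_{l+1}=\mathbf s^{i\oplus j\oplus k}\mid \mathcal X'_l=\mathbf s\big)=\frac{s_i+s_j+s_k+3}{\alpha(l+1)},$$ for $0\le l<n$, $1\le i<j<k\le N-2l$, and every $\mathbf s=(s_1,\dots,s_{N-2l})\in\mathcal S^\downarrow$ with $s_1+\dots+s_{N-2l}=M$ and $\mathbb P(\mathcal X'_l=\mathbf s)>0$.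
   Context: $\mathcal S^\downarrow$ is the set of nonincreasing sequences $s_1\ge s_2\ge\dots\ge 0$ with finitely many nonzero terms, identified with their nonzero entries (particles). For indices $i<j<k$ of nonzero entries, $\mathbf s^{i\oplus j\oplus k}$ is obtained by removing $s_i,s_j,s_k$, inserting $s_i+s_j+s_k$ and reranking decreasingly. The ternary coalescent is the continuous-time Markov jump process on $\mathcal S^\downarrow$ with jump rates $q(\mathbf s,\cdot)=\sum_{1\le i<j<k,\ s_k>0}(s_i+s_j+s_k+3)\delta_{\mathbf s^{i\oplus j\oplus k}}$. *)

From HB Require Import structures.
From mathcomp Require Import all_boot all_order all_algebra.
From mathcomp Require Import all_classical all_reals all_analysis.
From mathcomp Require Import exponential_distribution.

Set Implicit Arguments.
Unset Strict Implicit.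
Unset Printing Implicit Defensive.

Import Order.TTheory GRing.Theory Num.Theory.

Local Open Scope classical_set_scope.
Local Open Scope ring_scope.

Section ternary.
Variable R : realType.

(* A configuration in S^downarrow, identified with its list of nonzero
   entries (particles): a nonincreasing finite list of positive reals. *)
Definition config (s : seq R) : bool :=
  sorted (fun x y : R => y <= x) s && all (fun x : R => 0 < x) s.

(* s^{i (+) j (+) k}: remove the entries of (0-based) indices i, j, k,
   insert s_i + s_j + s_k and rerank decreasingly. *)
Definition merge3 (s : seq R) (i j k : nat) : seq R :=
  sort (fun x y : R => y <= x)
    ((s`_i + s`_j + s`_k)
       :: [seq s`_l | l <- iota 0 (size s) & l \notin [:: i; j; k]]).

Definition triple_ok (s : seq R) (i j k : nat) : bool :=
  [&& (i < j)%N, (j < k)%N, (k < size s)%N & 0 < s`_k].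

Definition rate3 (s : seq R) (i j k : nat) : R := s`_i + s`_j + s`_k + 3.

Definition qrate (s s' : seq R) : R :=
  \sum_(i < size s) \sum_(j < size s) \sum_(k < size s |
      triple_ok s i j k && (merge3 s i j k == s')) rate3 s i j k.

Definition qtot (s : seq R) : R :=
  \sum_(i < size s) \sum_(j < size s) \sum_(k < size s | triple_ok s i j k)
     rate3 s i j k.

(* transition matrix of the jump chain: q(s,s')/q(s), and s is absorbing
   when q(s) = 0 *)
Definition jumpP (s s' : seq R) : R :=
  if qtot s == 0 then (s' == s)%:R else qrate s s' / qtot s.

Variables (d : measure_display) (Omega : measurableType d)
  (P : probability Omega R).

Definition Pr (A : set Omega) : R := fine (P A).

Definition hist (Y : nat -> Omega -> seq R) (k : nat) (h : nat -> seq R)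
  : set Omega := [set w | forall m, (m <= k)%N -> Y m w = h m].

(* Continuous-time Markov jump process with jump rates q, started at r,
   described (Norris, Markov Chains, Sect. 2.6) through its jump chain
   Y k (the state after the k-th jump) and its holding times D k
   (the time spent in state Y k, i.e. T_{k+1} - T_k):
   - Y is a discrete-time Markov chain started at r with transition
     matrix jumpP;
   - conditionally on Y_0, ..., Y_k, the holding times D_0, ..., D_k are
     independent exponential random variables with parameters
     q(Y_0), ..., q(Y_k) (stated for non-absorbing states, q > 0; in an
     absorbing state the holding time is infinite). *)
Definition ternary_coalescent (r : seq R) (Y : nat -> Omega -> seq R)
    (D : nat -> Omega -> R) : Prop :=
  [/\ (forall k s, measurable [set w | Y k w = s]),
      (forall k, measurable_fun [set: Omega] (D k)),
      Pr [set w | Y 0 w = r] = 1,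
      (forall k (h : nat -> seq R) (s' : seq R),
          Pr (hist Y k h `&` [set w | Y k.+1 w = s'])
          = Pr (hist Y k h) * jumpP (h k) s') &
      (forall k (h : nat -> seq R) (B : nat -> set R),
          (forall m, (m <= k)%N -> 0 < qtot (h m)) ->
          (forall m, measurable (B m)) ->
          Pr (hist Y k h `&` [set w | forall m, (m <= k)%N -> B m (D m w)])
          = Pr (hist Y k h) *
            \prod_(m < k.+1) fine (exponential_prob (qtot (h m)) (B m)))].

(* T_k = time of the k-th coagulation = D_0 + ... + D_{k-1} *)
Definition jump_time (D : nat -> Omega -> R) (k : nat) (w : Omega) : R :=
  \sum_(m < k) D m w.

End ternary.

Definition alpha {R : realType} (M : R) (N k : nat) : R :=
  (M + N%:R + 2 - 2 * k%:R) * (N%:R + 1 - 2 * k%:R) * (N%:R - 2 * k%:R) / 2.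

(* The total jump rate of [N] particles of total mass [M] is
   [q(s) = (N - 1)(N - 2)(M + N) / 2], a function of [N] and [M] alone.  Every
   coagulation removes two particles and preserves the mass, so after [k]
   jumps the holding rate is the deterministic number [alpha (k + 1)],
   whatever path the jump chain took.  Conditioning on the path therefore
   does not change the law of the holding times: they are independent
   exponentials with parameters [alpha k], the transition probabilities of
   the jump chain are [q(s, s') / alpha], and the product rule on the
   rectangles [{D_m \in B_m}] extends (by uniqueness of measures on a
   pi-system) to the sigma-algebra of the holding times, hence to the jump
   times.  The last jump starts from three particles and is certain. *)

From HB Require Import structures.
From mathcomp Require Import all_boot all_order all_algebra.
From mathcomp Require Import all_classical all_reals all_analysis.
From mathcomp Require Import exponential_distribution.
From mathcomp Require Import ring lra zify.

Set Implicit Arguments.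
Unset Strict Implicit.
Unset Printing Implicit Defensive.

Import Order.TTheory GRing.Theory Num.Theory.
Local Open Scope classical_set_scope.
Local Open Scope ring_scope.

Section probability_facts.
Variables (R : realType) (d : measure_display) (Omega : measurableType d)
  (P : probability Omega R).

Lemma PrE A : measurable A -> P A = (Pr P A)%:E.
Proof. by move=> mA; rewrite /Pr fineK // fin_num_measure. Qed.

Lemma Pr_ge0 A : 0 <= Pr P A.
Proof. exact/fine_ge0/measure_ge0. Qed.

Lemma PrT : Pr P setT = 1.
Proof. by rewrite /Pr probability_setT. Qed.

Lemma Pr0 : Pr P set0 = 0.
Proof. by rewrite /Pr measure0. Qed.

Lemma PrDI A B : measurable A -> measurable B ->
  Pr P A = Pr P (A `\` B) + Pr P (A `&` B).
Proof.
move=> mA mB; apply: EFin_inj; rewrite EFinD -!PrE //.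
- exact: measureDI.
- exact: measurableI.
- exact: measurableD.
Qed.

Lemma Pr_le A B : measurable A -> measurable B -> A `<=` B -> Pr P A <= Pr P B.
Proof.
move=> mA mB AB; rewrite -lee_fin -(PrE mA) -(PrE mB).
by apply: le_measure => //; rewrite inE.
Qed.

Lemma Pr_subset_eq0 A B : measurable A -> measurable B -> A `<=` B ->
  Pr P B = 0 -> Pr P A = 0.
Proof.
move=> mA mB AB PB0; apply/eqP; rewrite eq_le Pr_ge0 andbT -PB0.
exact: Pr_le.
Qed.

End probability_facts.

Section partition.
Variables (R : realType) (d : measure_display) (Omega : measurableType d)
  (P : probability Omega R) (T : eqType) (X : Omega -> T).
Hypothesis mX : forall x, measurable [set w | X w = x].

Lemma measurable_mem (U : seq T) : measurable [set w | X w \in U].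
Proof.
elim: U => [|x U IH].
  by have -> : [set w | X w \in [::]] = set0 by apply/seteqP; split => w.
have -> : [set w | X w \in x :: U] = [set w | X w = x] `|` [set w | X w \in U].
  apply/seteqP; split => w /=; rewrite inE.
    by case/orP => [/eqP ->|]; [left|right].
  by case=> [->|->]; rewrite ?eqxx ?orbT.
exact: measurableU.
Qed.

Lemma Pr_partition (U : seq T) F : uniq U -> measurable F ->
  Pr P F = \sum_(x <- U) Pr P (F `&` [set w | X w = x])
           + Pr P (F `\` [set w | X w \in U]).
Proof.
elim: U F => [|x U IH] F.
  move=> _ _; rewrite big_nil add0r; congr (Pr P _).
  by apply/seteqP; split => w /=; [move=> Fw; split|case].
move=> /= /andP[xU uU] mF.
rewrite (PrDI P mF (mX x)) (IH _ uU); last exact: measurableD.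
rewrite big_cons.
have -> : \sum_(y <- U) Pr P ((F `\` [set w | X w = x]) `&` [set w | X w = y])
   = \sum_(y <- U) Pr P (F `&` [set w | X w = y]).
  apply: eq_big_seq => y yU; congr (Pr P _).
  apply/seteqP; split => w /=; first by case=> -[].
  case=> Fw Xw; split=> //; split=> // Xx.
  by move: xU; rewrite -Xx Xw yU.
have -> : (F `\` [set w | X w = x]) `\` [set w | X w \in U] =
    F `\` [set w | X w \in x :: U].
  apply/seteqP; split => w /=.
    by case=> -[Fw nx] nU; split=> //; rewrite inE => /orP[/eqP|].
  case=> Fw; rewrite inE => H; split; last by move=> e; apply: H; rewrite e orbT.
  by split=> // e; apply: H; rewrite e eqxx.
lra.
Qed.

End partition.

Lemma measurable_forall_le (R : realType) (d : measure_display)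
    (T : measurableType d) (f : nat -> T -> R) (B : nat -> set R) K :
  (forall k, (k <= K)%N -> measurable_fun setT (f k)) ->
  (forall k, measurable (B k)) ->
  measurable [set w | forall k, (k <= K)%N -> B k (f k w)].
Proof.
move=> mf mB.
have -> : [set w | forall k, (k <= K)%N -> B k (f k w)] =
    \bigcap_k (if (k <= K)%N then setT `&` f k @^-1` B k else setT).
  apply/seteqP; split => w /=.
    by move=> H k _; case: ifPn => // kK; split=> //; apply: H.
  by move=> H k kK; have := H k I; rewrite kK => -[].
apply: bigcapT_measurable => k; case: ifPn => // kK.
exact: mf.
Qed.

Lemma sum_seq_delta (R : realType) (T : eqType) (s : seq T) x (c : R) :
  uniq s -> x \in s -> \sum_(y <- s) (if x == y then c else 0) = c.
Proof.
move=> us xs; rewrite (big_rem x) //= eqxx big1_seq ?addr0 // => y /andP[_ yr].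
move: yr; rewrite mem_rem_uniq //= => /andP[yx _].
by rewrite eq_sym (negbTE yx).
Qed.

Section successors.
Variable R : realType.
Implicit Types s : seq R.

(* [s] itself is included because absorbing states jump to themselves. *)
Definition successors s : seq (seq R) :=
  let I := iota 0 (size s) in
  undup (s :: [seq merge3 s i jk.1 jk.2 | i <- I, jk <- [seq (j, k) | j <- I, k <- I]]).

Lemma mem_successors s (i j k : nat) :
  (i < size s)%N -> (j < size s)%N -> (k < size s)%N ->
  merge3 s i j k \in successors s.
Proof.
move=> ii jj kk; rewrite mem_undup inE; apply/orP; right.
apply/allpairsP; exists (i, (j, k)); split=> //; first by rewrite mem_iota.
by apply/allpairsP; exists (j, k); rewrite !mem_iota.
Qed.

Lemma successors_self s : s \in successors s.
Proof. by rewrite mem_undup inE eqxx. Qed.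

Lemma successors_uniq s : uniq (successors s).
Proof. exact: undup_uniq. Qed.

Lemma sum_qrate s : \sum_(s' <- successors s) qrate s s' = qtot s.
Proof.
have qE s' : qrate s s' = \sum_(i < size s) \sum_(j < size s) \sum_(k < size s)
   (if triple_ok s i j k && (merge3 s i j k == s') then rate3 s i j k else 0).
  by apply: eq_bigr => i _; apply: eq_bigr => j _; rewrite big_mkcond.
rewrite (eq_bigr _ (fun s' _ => qE s')) /qtot.
rewrite exchange_big; apply: eq_bigr => i _.
rewrite exchange_big; apply: eq_bigr => j _.
rewrite exchange_big [RHS]big_mkcond; apply: eq_bigr => k _ /=.
case: (triple_ok s i j k); last by rewrite big1.
exact: sum_seq_delta (successors_uniq s) (mem_successors _ _ _).
Qed.

Lemma sum_jumpP s : \sum_(s' <- successors s) jumpP s s' = 1.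
Proof.
rewrite /jumpP; have [q0|q0] := eqVneq (qtot s) 0.
  rewrite -[RHS](sum_seq_delta (1 : R) (successors_uniq s) (successors_self s)).
  by apply: eq_bigr => s' _; rewrite eq_sym; case: eqP.
by rewrite -big_distrl /= sum_qrate divff.
Qed.

End successors.

Section merge3.
Variable R : realType.
Implicit Types s : seq R.

Definition unmerged s (i j k : nat) :=
  [seq s`_l | l <- iota 0 (size s) & l \notin [:: i; j; k]].

Lemma perm_unmerged s i j k : (i < j)%N -> (j < k)%N -> (k < size s)%N ->
  perm_eq s (s`_i :: s`_j :: s`_k :: unmerged s i j k).
Proof.
move=> ij jk ks.
rewrite -[s in perm_eq s _](mkseq_nth 0) /mkseq.
have -> : [:: s`_i, s`_j, s`_k & unmerged s i j k] =
    [seq s`_l | l <- [:: i; j; k] ++ [seq l <- iota 0 (size s) | l \notin [:: i; j; k]]].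
  by [].
apply: perm_map.
have split_iota : perm_eq (iota 0 (size s))
   ([seq l <- iota 0 (size s) | l \in [:: i; j; k]] ++
    [seq l <- iota 0 (size s) | l \notin [:: i; j; k]]).
  by rewrite perm_sym; apply: permEl; exact: perm_filterC.
apply: perm_trans split_iota _; apply: perm_cat => //.
apply: uniq_perm.
- exact/filter_uniq/iota_uniq.
- by rewrite /= !inE negb_or !andbT; apply/andP; split; apply/negP => /eqP; lia.
move=> x; rewrite mem_filter mem_iota /= !inE.
apply/idP/idP; first by case/andP.
by move=> H; rewrite H /=; move: H => /orP[/eqP->|/orP[/eqP->|/eqP->]]; lia.
Qed.

Lemma perm_merge3 s i j k :
  perm_eq (merge3 s i j k) ((s`_i + s`_j + s`_k) :: unmerged s i j k).
Proof. exact/permEl/perm_sort. Qed.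

Lemma sum_merge3 s i j k : (i < j)%N -> (j < k)%N -> (k < size s)%N ->
  \sum_(x <- merge3 s i j k) x = \sum_(x <- s) x.
Proof.
move=> ij jk ks.
rewrite (perm_big _ (perm_merge3 s i j k)) (perm_big _ (perm_unmerged ij jk ks)).
by rewrite !big_cons /= !addrA.
Qed.

Lemma size_merge3 s i j k : (i < j)%N -> (j < k)%N -> (k < size s)%N ->
  size (merge3 s i j k) = (size s - 2)%N.
Proof.
move=> ij jk ks.
by rewrite (perm_size (perm_merge3 s i j k)) (perm_size (perm_unmerged ij jk ks)) /=; lia.
Qed.

Lemma config_nth_gt0 s l : config s -> (l < size s)%N -> 0 < s`_l.
Proof. by case/andP=> _ /allP pos ls; apply/pos/mem_nth. Qed.

Lemma config_merge3 s i j k : (i < j)%N -> (j < k)%N -> (k < size s)%N ->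
  config s -> config (merge3 s i j k).
Proof.
move=> ij jk ks cs; apply/andP; split.
  by apply: sort_sorted => x y; exact: le_total.
rewrite (perm_all _ (perm_merge3 s i j k)) /=; apply/andP; split.
  have := config_nth_gt0 cs ks; have := config_nth_gt0 cs (ltn_trans jk ks).
  have := config_nth_gt0 cs (ltn_trans ij (ltn_trans jk ks)); lra.
case/andP: cs => _; rewrite (perm_all _ (perm_unmerged ij jk ks)) /=.
by case/and4P.
Qed.

Lemma config_sum_ge0 s : config s -> 0 <= \sum_(x <- s) x.
Proof.
case/andP=> _ /allP pos; rewrite big_seq; apply: sumr_ge0 => x xs.
exact/ltW/pos.
Qed.

End merge3.

Section total_rate.
Variable R : realType.
Implicit Types f : nat -> R.

Definition pair_sum f (c : R) m :=
  \sum_(i < m) \sum_(j < m) (if (i < j)%N then f i + f j + c else 0).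

Definition triple_sum f m :=
  \sum_(i < m) \sum_(j < m) \sum_(k < m)
     (if (i < j)%N && (j < k)%N then f i + f j + f k + 3 else 0).

Lemma pair_sumS f c m :
  pair_sum f c m.+1 = pair_sum f c m + \sum_(i < m) (f i + f m + c).
Proof.
rewrite /pair_sum big_ord_recr /= [X in _ + X]big1; last first.
  by move=> j _; rewrite ifF //; have := ltn_ord j; lia.
rewrite addr0 -big_split /=; apply: eq_bigr => i _.
by rewrite big_ord_recr /= ltn_ord.
Qed.

Lemma pair_sumE f c m :
  2 * pair_sum f c m = 2 * (m%:R - 1) * (\sum_(i < m) f i) + c * m%:R * (m%:R - 1).
Proof.
elim: m => [|m IH]; first by rewrite /pair_sum !big_ord0; ring.
have sum_cst (x : R) : \sum_(i < m) x = x * m%:R.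
  by rewrite sumr_const card_ord mulr_natr.
rewrite pair_sumS mulrDr IH big_ord_recr /= !big_split /= !sum_cst -natr1; ring.
Qed.

Lemma triple_sumS f m : triple_sum f m.+1 = triple_sum f m + pair_sum f (f m + 3) m.
Proof.
rewrite /triple_sum big_ord_recr /= [X in _ + X]big1; last first.
  move=> j _; rewrite big1 // => k _; rewrite ifF //.
  by apply/negbTE/negP => /andP[a b]; have := ltn_ord j; lia.
rewrite addr0 /pair_sum -big_split /=; apply: eq_bigr => i _.
rewrite big_ord_recr /= [X in _ + X]big1; last first.
  move=> k _; rewrite ifF //.
  by apply/negbTE/negP => /andP[a b]; have := ltn_ord k; lia.
rewrite addr0 -big_split /=; apply: eq_bigr => j _.
rewrite big_ord_recr /= (ltn_ord j) andbT; congr (_ + _).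
by case: ifP => _; rewrite ?addrA.
Qed.

Lemma triple_sumE f m :
  2 * triple_sum f m = (m%:R - 1) * (m%:R - 2) * (\sum_(i < m) f i + m%:R).
Proof.
elim: m => [|m IH]; first by rewrite /triple_sum !big_ord0; ring.
by rewrite triple_sumS mulrDr IH pair_sumE big_ord_recr /= -natr1; ring.
Qed.

(* With [N] particles of total mass [M], [2 q(s) = (N - 1)(N - 2)(M + N)]:
   every particle lies in [(N - 1)(N - 2)/2] triples, and there are
   [N(N - 1)(N - 2)/6] triples, each contributing [3]. *)
Lemma qtotE (s : seq R) : config s ->
  2 * qtot s = ((size s)%:R - 1) * ((size s)%:R - 2) * (\sum_(x <- s) x + (size s)%:R).
Proof.
move=> cs; have -> : qtot s = triple_sum (fun l => s`_l) (size s).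
  rewrite /qtot /triple_sum; apply: eq_bigr => i _; apply: eq_bigr => j _.
  rewrite big_mkcond; apply: eq_bigr => k _ /=.
  by rewrite /triple_ok ltn_ord (config_nth_gt0 cs (ltn_ord k)) /= andbT.
by rewrite triple_sumE (big_nth 0) big_mkord.
Qed.

Lemma qtot_gt0 (s : seq R) : config s -> (3 <= size s)%N -> 0 < qtot s.
Proof.
move=> cs s3; have e := qtotE cs; have g := config_sum_ge0 cs.
have h3 : (3 : R) <= (size s)%:R by rewrite (ler_nat R 3).
suff : 0 < ((size s)%:R - 1) * ((size s)%:R - 2) * (\sum_(x <- s) x + (size s)%:R).
  lra.
by rewrite !mulr_gt0 //; lra.
Qed.

Lemma qtot_alpha (N l : nat) (M : R) (s : seq R) : (2 * l <= N)%N -> config s ->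
  size s = (N - 2 * l)%N -> \sum_(x <- s) x = M -> qtot s = alpha M N l.+1.
Proof.
move=> lN cs sz sM.
have e := qtotE cs; rewrite sz sM natrB // natrM in e.
have -> : qtot s = (2 * qtot s) / 2 by field.
by rewrite e /alpha -natr1; field.
Qed.

End total_rate.

Section jump_chain.
Variable R : realType.
Implicit Types s : seq R.

Lemma jumpP_neq0_merge3 s s' : qtot s != 0 -> jumpP s s' != 0 ->
  exists i j k, triple_ok s i j k /\ s' = merge3 s i j k.
Proof.
move=> q0 jn; apply/not_existsP => nomerge; move: jn.
rewrite /jumpP (negbTE q0) /qrate big1 ?mul0r ?eqxx // => i _.
rewrite big1 // => j _; rewrite big1 // => k /andP[ok /eqP e].
by exfalso; apply: (nomerge i); exists j, k.
Qed.

(* Three particles can only merge into one. *)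
Lemma jumpP_size3 s s' : size s = 3%N -> config s -> jumpP s s' != 0 ->
  jumpP s s' = 1.
Proof.
move=> s3 cs.
have q0 : qtot s != 0 by rewrite gt_eqF // qtot_gt0 // s3.
have only_triple i j k : triple_ok s i j k -> merge3 s i j k = merge3 s 0 1 2.
  case/and4P=> ij jk ks _; rewrite s3 in ks.
  by have [-> -> ->] : [/\ i = 0, j = 1 & k = 2]%N by split; lia.
rewrite /jumpP (negbTE q0) /qrate.
have [<-|ne] := eqVneq (merge3 s 0 1 2) s'.
  rewrite [X in X / _](_ : _ = qtot s) ?divff //.
  apply: eq_bigr => i _; apply: eq_bigr => j _; apply: eq_bigl => k.
  by case ok: (triple_ok s i j k); rewrite //= (only_triple _ _ _ ok) eqxx.
rewrite big1 ?mul0r ?eqxx // => i _; rewrite big1 // => j _.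
rewrite big1 // => k /andP[ok /eqP e].
by move: ne; rewrite -e (only_triple _ _ _ ok) eqxx.
Qed.

End jump_chain.

Section histories.
Variables (R : realType) (d : measure_display) (Omega : measurableType d)
  (Y : nat -> Omega -> seq R).

Lemma hist0 h : hist Y 0 h = [set w | Y 0 w = h 0%N].
Proof.
apply/seteqP; split => w /=; first exact.
by move=> H k; rewrite leqn0 => /eqP ->.
Qed.

Lemma histS k h : hist Y k.+1 h = hist Y k h `&` [set w | Y k.+1 w = h k.+1].
Proof.
apply/seteqP; split => w /=.
  by move=> H; split; [move=> m mk; apply/H/leqW|apply: H].
by move=> [H1 H2] m; rewrite leq_eqVlt ltnS => /orP[/eqP->//|]; exact: H1.
Qed.

Lemma eq_hist k h h' : (forall m, (m <= k)%N -> h m = h' m) ->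
  hist Y k h = hist Y k h'.
Proof.
by move=> e; apply/seteqP; split => w /= H m mk; [rewrite -e|rewrite e] => //; apply: H.
Qed.

Lemma hist_last k h : hist Y k h `<=` [set w | Y k w = h k].
Proof. by move=> w; apply. Qed.

Lemma measurable_hist k h : (forall m s, measurable [set w | Y m w = s]) ->
  measurable (hist Y k h).
Proof.
move=> mY; elim: k => [|k IH]; first by rewrite hist0.
by rewrite histS; exact: measurableI.
Qed.

End histories.

Section jump_process.
Variables (R : realType) (d : measure_display) (Omega : measurableType d)
  (P : probability Omega R).
Variables (r : seq R) (Y : nat -> Omega -> seq R) (D : nat -> Omega -> R).
Hypothesis HT : ternary_coalescent P r Y D.

Let mY : forall k s, measurable [set w | Y k w = s].
Proof. by case: HT. Qed.

Let Y0_r : Pr P [set w | Y 0 w = r] = 1.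
Proof. by case: HT. Qed.

Let Pr_hist_jump : forall k (h : nat -> seq R) (s' : seq R),
    Pr P (hist Y k h `&` [set w | Y k.+1 w = s'])
    = Pr P (hist Y k h) * jumpP (h k) s'.
Proof. by case: HT. Qed.

Let mhist k h : measurable (hist Y k h).
Proof. exact: measurable_hist. Qed.

Lemma Pr_Y0_neq : Pr P (setT `\` [set w | Y 0 w = r]) = 0.
Proof. by have := PrDI P measurableT (mY 0 r); rewrite PrT setTI Y0_r; lra. Qed.

Lemma Pr_hist_successors k h F : measurable F -> F `<=` hist Y k h ->
  Pr P F = \sum_(s <- successors (h k)) Pr P (F `&` [set w | Y k.+1 w = s]).
Proof.
move=> mF FH; have uS := successors_uniq (h k).
rewrite (Pr_partition P (mY k.+1) uS mF).
suff -> : Pr P (F `\` [set w | Y k.+1 w \in successors (h k)]) = 0 by rewrite addr0.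
have mS := measurable_mem (mY k.+1) (successors (h k)).
apply: (@Pr_subset_eq0 _ _ _ _ _ (hist Y k h `\` [set w | Y k.+1 w \in successors (h k)])).
- exact: measurableD.
- exact: measurableD.
- by move=> w [Fw nw]; split=> //; apply: FH.
have := Pr_partition P (mY k.+1) uS (mhist k h).
under eq_bigr => s _ do rewrite Pr_hist_jump.
by rewrite -big_distrr /= sum_jumpP mulr1; lra.
Qed.

(* the trajectories [[:: Y_0; ...; Y_k]] of positive probability are among
   [paths k] *)
Fixpoint paths k : seq (seq (seq R)) :=
  if k is k'.+1 then [seq rcons g s | g <- paths k', s <- successors (last [::] g)]
  else [:: [:: r]].

Lemma size_paths k g : g \in paths k -> size g = k.+1.
Proof.
elim: k g => [|k IH] g /=; first by rewrite inE => /eqP ->.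
by case/allpairsPdep => g' [s [g'G _ ->]]; rewrite size_rcons (IH _ g'G).
Qed.

Lemma Pr_sum_paths k F : measurable F ->
  Pr P F = \sum_(g <- paths k) Pr P (F `&` hist Y k (nth [::] g)).
Proof.
move=> mF; elim: k => [|k IH].
  rewrite /= big_seq1 hist0 /= (PrDI P mF (mY 0 r)).
  suff -> : Pr P (F `\` [set w | Y 0 w = r]) = 0 by rewrite add0r.
  apply: Pr_subset_eq0 Pr_Y0_neq; [exact: measurableD|exact: measurableD|].
  by move=> w [].
rewrite IH /= big_allpairs_dep; apply: eq_big_seq => g gG.
have sg := size_paths gG.
rewrite (@Pr_hist_successors k (nth [::] g) (F `&` hist Y k (nth [::] g))); last 2 first.
- exact: measurableI.
- exact: subIsetr.
rewrite -nth_last sg; apply: eq_bigr => s _; congr (Pr P _).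
have -> : hist Y k (nth [::] g) = hist Y k (nth [::] (rcons g s)).
  by apply: eq_hist => m mk; rewrite nth_rcons sg ltnS mk.
by rewrite histS setIA nth_rcons sg ltnn eqxx.
Qed.

Lemma Pr_transition l s s' :
  Pr P ([set w | Y l w = s] `&` [set w | Y l.+1 w = s'])
  = Pr P [set w | Y l w = s] * jumpP s s'.
Proof.
rewrite (Pr_sum_paths l (measurableI _ _ (mY l s) (mY l.+1 s'))).
rewrite (Pr_sum_paths l (mY l s)) big_distrl /=.
apply: eq_bigr => g _; set h := nth [::] g.
have [hl|ne] := eqVneq (h l) s.
  have E : [set w | Y l w = s] `&` hist Y l h = hist Y l h.
    by apply/setIidr => w /hist_last /=; rewrite hl.
  by rewrite E -[in RHS]hl -Pr_hist_jump setIAC E setIC.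
have E : [set w | Y l w = s] `&` hist Y l h = set0.
  apply/seteqP; split => w //= [Yw /hist_last /=]; rewrite Yw => hs.
  by move: ne; rewrite hs eqxx.
by rewrite setIAC E set0I Pr0 mul0r.
Qed.

Lemma hist_support k h : Pr P (hist Y k h) != 0 ->
  h 0%N = r /\ forall m, (m < k)%N -> jumpP (h m) (h m.+1) != 0.
Proof.
elim: k => [|k IH].
  rewrite hist0 => nz; split=> //; apply: contraNeq nz => hr; apply/eqP.
  apply: Pr_subset_eq0 Pr_Y0_neq => //; first exact: measurableD.
  by move=> w /= e; split=> // e'; move: hr; rewrite -e -e' eqxx.
rewrite histS Pr_hist_jump mulf_eq0 negb_or => /andP[nz jn].
have [h0 jumps] := IH nz; split=> // m.
by rewrite ltnS leq_eqVlt => /orP[/eqP->//|]; exact: jumps.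
Qed.

Lemma Pr_hist_sure_jump k h C : jumpP (h k) (h k.+1) = 1 -> measurable C ->
  Pr P (C `&` hist Y k.+1 h) = Pr P (C `&` hist Y k h).
Proof.
move=> sure mC; have mCk := measurableI _ _ mC (mhist k h).
rewrite histS setIA [RHS](PrDI P mCk (mY k.+1 (h k.+1))).
suff -> : Pr P ((C `&` hist Y k h) `\` [set w | Y k.+1 w = h k.+1]) = 0.
  by rewrite add0r.
apply: (@Pr_subset_eq0 _ _ _ _ _ (hist Y k h `\` [set w | Y k.+1 w = h k.+1])).
- exact: measurableD.
- exact: measurableD.
- by move=> w [[_ ?] ?].
by have := PrDI P (mhist k h) (mY k.+1 (h k.+1)); rewrite Pr_hist_jump sure; lra.
Qed.

End jump_process.

Section odd_initial_configuration.
Variables (R : realType) (d : measure_display) (Omega : measurableType d)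
  (P : probability Omega R).
Variables (n : nat) (r : seq R) (Y : nat -> Omega -> seq R) (D : nat -> Omega -> R).
Hypotheses (cr : config r) (sr : size r = (2 * n).+1).
Hypothesis HT : ternary_coalescent P r Y D.

Let N := size r.
Let M := \sum_(x <- r) x.

Let mY : forall k s, measurable [set w | Y k w = s].
Proof. by case: HT. Qed.

Let mD : forall k, measurable_fun setT (D k).
Proof. by case: HT. Qed.

Let Pr_hist_holding : forall k (h : nat -> seq R) (B : nat -> set R),
    (forall m, (m <= k)%N -> 0 < qtot (h m)) ->
    (forall m, measurable (B m)) ->
    Pr P (hist Y k h `&` [set w | forall m, (m <= k)%N -> B m (D m w)])
    = Pr P (hist Y k h) *
      \prod_(m < k.+1) fine (exponential_prob (qtot (h m)) (B m)).
Proof. by case: HT. Qed.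

Let mhist k h : measurable (hist Y k h).
Proof. exact: measurable_hist. Qed.

Lemma hist_support_config k h : (k <= n)%N -> Pr P (hist Y k h) != 0 ->
  forall m, (m <= k)%N ->
  [/\ config (h m), size (h m) = (N - 2 * m)%N & \sum_(x <- h m) x = M].
Proof.
move=> kn /(hist_support HT) [h0 jumps]; elim=> [|m IH] mk.
  by rewrite h0 muln0 subn0.
have [cm sm em] := IH (ltnW mk).
have q0 : qtot (h m) != 0 by rewrite gt_eqF // qtot_gt0 // sm /N sr; lia.
have [i [j [k' [/and4P[ij jk ks _] ->]]]] := jumpP_neq0_merge3 q0 (jumps m mk).
split; first exact: config_merge3.
- by rewrite size_merge3 // sm; lia.
- by rewrite sum_merge3.
Qed.

Lemma Pr_holding_hist K (B : nat -> set R) h : (K < n)%N ->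
  (forall m, measurable (B m)) ->
  Pr P ([set w | forall m, (m <= K)%N -> B m (D m w)] `&` hist Y K h)
  = Pr P (hist Y K h) *
    \prod_(m < K.+1) fine (exponential_prob (alpha M N m.+1) (B m)).
Proof.
move=> Kn mB.
have mRect : measurable [set w | forall m, (m <= K)%N -> B m (D m w)].
  by apply: measurable_forall_le => // m _; exact: mD.
have [z|nz] := eqVneq (Pr P (hist Y K h)) 0.
  rewrite z mul0r; apply: Pr_subset_eq0 z; [exact: measurableI|exact: mhist|].
  exact: subIsetr.
have inv := hist_support_config (ltnW Kn) nz.
rewrite setIC Pr_hist_holding //; last first.
  by move=> m mK; have [cm sm _] := inv m mK; rewrite qtot_gt0 // sm /N sr; lia.
congr (_ * _); apply: eq_bigr => m _.
have [cm sm em] := inv m (ltn_ord m).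
by rewrite (qtot_alpha _ cm sm em) //; have := ltn_ord m; rewrite /N sr; lia.
Qed.

Lemma Pr_holding K (B : nat -> set R) : (K < n)%N -> (forall m, measurable (B m)) ->
  Pr P [set w | forall m, (m <= K)%N -> B m (D m w)]
  = \prod_(m < K.+1) fine (exponential_prob (alpha M N m.+1) (B m)).
Proof.
move=> Kn mB.
have mRect : measurable [set w | forall m, (m <= K)%N -> B m (D m w)].
  by apply: measurable_forall_le => // m _; exact: mD.
have paths_total : \sum_(g <- paths r K) Pr P (hist Y K (nth [::] g)) = 1.
  rewrite -(PrT P) (Pr_sum_paths HT K measurableT).
  by apply: eq_bigr => g _; rewrite setTI.
rewrite (Pr_sum_paths HT K mRect).
rewrite (eq_bigr _ (fun g _ => Pr_holding_hist (nth [::] g) Kn mB)).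
by rewrite -big_distrl /= paths_total mul1r.
Qed.

Definition holding_events K : set (set Omega) :=
  [set A | exists B : nat -> set R, (forall m, measurable (B m)) /\
             A = [set w | forall m, (m <= K)%N -> B m (D m w)]].

(* A probability measure is determined by its values on a pi-system, so
   [Pr (. `&` hist)] and [Pr hist * Pr (.)] agree on the sigma-algebra
   generated by the holding times, as they do on [holding_events K]. *)
Lemma holding_indep_hist K h E : (K < n)%N -> <<s holding_events K >> E ->
  Pr P (E `&` hist Y K h) = Pr P E * Pr P (hist Y K h).
Proof.
move=> Kn sE; have mHK := mhist K h.
have GM : holding_events K `<=` measurable.
  by move=> A [B [mB ->]]; apply: measurable_forall_le => // m _; exact: mD.
have GT : forall i : nat, holding_events K setT.
  move=> _; exists (fun _ => setT); split=> //.
  by apply/seteqP; split => w.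
have cover : \bigcup_(i : nat) (setT : set Omega) = setT.
  by apply/seteqP; split=> // w _; exists 0%N.
have GI : setI_closed (holding_events K).
  move=> A1 A2 [B1 [mB1 ->]] [B2 [mB2 ->]].
  exists (fun m => B1 m `&` B2 m); split; first by move=> m; exact: measurableI.
  apply/seteqP; split => w /=; first by move=> [H1 H2] m mK; split; [apply: H1|apply: H2].
  by move=> H; split=> m mK; have [] := H m mK.
have agree A : holding_events K A ->
    mrestr P mHK A = mscale (NngNum (Pr_ge0 P (hist Y K h))) P A.
  case=> B [mB ->]; have mRect := GM _ (ex_intro _ B (conj mB erefl)).
  rewrite /mrestr /mscale /= (PrE P (measurableI _ _ mRect mHK)) (PrE P mRect).
  by rewrite Pr_holding_hist // Pr_holding // EFinM.
have finite : forall k : nat, (mrestr P mHK setT < +oo)%E.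
  by move=> _; rewrite /mrestr setTI (PrE P mHK) ltry.
have mE : measurable E.
  exact: smallest_sub (@sigma_algebra_measurable _ Omega) GM _ sE.
have := g_sigma_algebra_measure_unique _ GM (fun=> setT) GT cover
  (mrestr P mHK) (mscale (NngNum (Pr_ge0 P (hist Y K h))) P) GI agree finite E sE.
move=> unique.
have {unique} : P (E `&` hist Y K h) = ((Pr P (hist Y K h))%:E * P E)%E := unique.
rewrite (PrE P (measurableI _ _ mE mHK)) (PrE P mE) -EFinM.
by case=> ->; rewrite mulrC.
Qed.


Lemma Pr_holding_times (B : nat -> set R) : (forall k, measurable (B k)) ->
  Pr P [set w | forall k, (k < n)%N -> B k (D k w)]
  = \prod_(k < n) fine (exponential_prob (alpha M N k.+1) (B k)).
Proof.
move=> mB; case En: n => [|K]; last first.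
  by have := @Pr_holding K B; rewrite En; apply.
rewrite big_ord0 -(PrT P); congr (Pr P _).
by apply/seteqP; split => w // _ k.
Qed.

Lemma measurable_holding_sigma K m : (m <= K)%N ->
  measurable_fun (setT : set (g_sigma_algebraType (holding_events K))) (D m).
Proof.
move=> mK _ Bm mBm; apply: sub_sigma_algebra.
exists (fun m' => if m' == m then Bm else setT); split; first by move=> m'; case: ifP.
apply/seteqP; split => w /=; first by move=> [_ H] m' _; case: eqP => [->|].
by move=> H; split=> //; have := H m mK; rewrite eqxx.
Qed.

Lemma jump_times_indep_hist (B : nat -> set R) h : (forall k, measurable (B k)) ->
  Pr P ([set w | forall k, (k <= n)%N -> B k (jump_time D k w)] `&` hist Y n h)
  = Pr P [set w | forall k, (k <= n)%N -> B k (jump_time D k w)]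
    * Pr P (hist Y n h).
Proof.
move=> mB; set E := [set w | forall k, (k <= n)%N -> B k (jump_time D k w)].
have mE : measurable E.
  apply: measurable_forall_le => // k _.
  by apply: measurable_sum => m; exact: mD.
case En: n => [|K].
  have [B00|nB00] := pselect (B 0%N 0).
    have -> : E = setT.
      apply/seteqP; split => w // _ k; rewrite En leqn0 => /eqP ->.
      by rewrite /jump_time big_ord0.
    by rewrite setTI PrT mul1r.
  have -> : E = set0.
    apply/seteqP; split => w // /(_ 0%N); rewrite En /jump_time big_ord0.
    by move/(_ isT).
  by rewrite set0I Pr0 mul0r.
rewrite -En; have Kn : (K < n)%N by rewrite En.
have [z|nz] := eqVneq (Pr P (hist Y n h)) 0.
  rewrite z mulr0; apply: Pr_subset_eq0 z; [exact: measurableI|exact: mhist|].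
  exact: subIsetr.
have [_ jumps] := hist_support HT nz.
have [cK sK _] := hist_support_config (leqnn n) nz (ltnW Kn).
have s3 : size (h K) = 3%N by rewrite sK /N sr En; lia.
have sure := jumpP_size3 s3 cK (jumps K Kn).
have last_sure C : measurable C -> Pr P (C `&` hist Y n h) = Pr P (C `&` hist Y K h).
  by move=> mC; rewrite En; exact: (Pr_hist_sure_jump HT sure mC).
rewrite last_sure // -[hist Y n h]setTI last_sure // setTI.
apply: holding_indep_hist => //.
apply: (@measurable_forall_le _ _ (g_sigma_algebraType (holding_events K))) => // k kn.
apply: measurable_sum => m; apply: measurable_holding_sigma.
by have := ltn_ord m; rewrite En in kn; lia.
Qed.

Lemma Pr_merge3_transition l s i j k : (l < n)%N ->
  config s -> size s = (N - 2 * l)%N -> \sum_(x <- s) x = M ->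
  0 < Pr P [set w | Y l w = s] ->
  Pr P ([set w | Y l w = s] `&` [set w | Y l.+1 w = merge3 s i j k])
    / Pr P [set w | Y l w = s]
  = qrate s (merge3 s i j k) / alpha M N l.+1.
Proof.
move=> ln cs ss sM pos.
have lN : (2 * l <= N)%N by rewrite /N sr; lia.
rewrite (Pr_transition HT) mulrC mulrA mulVf ?mul1r ?gt_eqF //.
rewrite /jumpP -(qtot_alpha lN cs ss sM) ifF //.
by apply/negbTE; rewrite gt_eqF // qtot_gt0 // ss /N sr; lia.
Qed.

End odd_initial_configuration.

Theorem proposition2p2 (R : realType) (d : measure_display)
  (Omega : measurableType d) (P : probability Omega R)
  (n : nat) (r : seq R) (Y : nat -> Omega -> seq R) (D : nat -> Omega -> R) :
  config r -> size r = (2 * n).+1 ->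
  ternary_coalescent P r Y D ->
  let N := size r in
  let M := \sum_(x <- r) x in
  (* (i) Delta_1, ..., Delta_n independent, Delta_k ~ Exp(alpha k) *)
  (forall B : nat -> set R, (forall k, measurable (B k)) ->
     Pr P [set w | forall k, (k < n)%N -> B k (D k w)]
     = \prod_(k < n) fine (exponential_prob (alpha M N k.+1) (B k)))
  /\
  (* (i) (T_k)_{0<=k<=n} and (X'_k)_{0<=k<=n} are independent *)
  (forall (B : nat -> set R) (h : nat -> seq R),
     (forall k, measurable (B k)) ->
     Pr P ([set w | forall k, (k <= n)%N -> B k (jump_time D k w)]
             `&` hist Y n h)
     = Pr P [set w | forall k, (k <= n)%N -> B k (jump_time D k w)]
       * Pr P (hist Y n h))
  /\
  (* (ii) (X'_k)_{0<=k<=n} is a Markov chain ... *)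
  (forall (l : nat) (h : nat -> seq R) (s' : seq R), (l < n)%N ->
     0 < Pr P (hist Y l h) ->
     Pr P (hist Y l h `&` [set w | Y l.+1 w = s'])
       * Pr P [set w | Y l w = h l]
     = Pr P (hist Y l h)
       * Pr P ([set w | Y l w = h l] `&` [set w | Y l.+1 w = s']))
  /\
  (* (ii) ... with the stated transition probabilities *)
  (forall (l : nat) (s : seq R) (i j k : nat), (l < n)%N ->
     config s -> size s = (N - 2 * l)%N -> \sum_(x <- s) x = M ->
     0 < Pr P [set w | Y l w = s] ->
     (i < j)%N -> (j < k)%N -> (k < size s)%N ->
     Pr P ([set w | Y l w = s] `&` [set w | Y l.+1 w = merge3 s i j k])
     / Pr P [set w | Y l w = s]
     = qrate s (merge3 s i j k) / alpha M N l.+1).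
Proof.
move=> cr sr HT N M; split; [|split; [|split]].
- exact: Pr_holding_times cr sr HT.
- exact: jump_times_indep_hist cr sr HT.
- move=> l h s' _ _; have [_ _ _ Pr_hist_jump _] := HT.
  by rewrite Pr_hist_jump (Pr_transition HT); ring.
- by move=> l s i j k ln cs ss sM pos _ _ _; exact: (Pr_merge3_transition cr sr HT).
Qed.
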